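(* Let $k$ be a field, let $X$ be a $\mathcal{T}$-space and let $U\in\mathcal{T}$. Then the full additive subcategory of $\mathcal{T}$-flabby objects of $\mathrm{Mod}(k_\mathcal{T})$ is $\Gamma(U;\bullet)$-injective, namely: (i) for every $F\in\mathrm{Mod}(k_\mathcal{T})$ there exist a $\mathcal{T}$-flabby $F'$ and a monomorphism $F\to F'$; (ii) if $0\to F'\to F\to F''\to0$ is exact in $\mathrm{Mod}(k_\mathcal{T})$ and $F'$ is $\mathcal{T}$-flabby, then $0\to\Gamma(U;F')\to\Gamma(U;F)\to\Gamma(U;F'')\to0$ is exact; (iii) if $0\to F'\to F\to F''\to0$ is exact in $\mathrm{Mod}(k_\mathcal{T})$ and $F'$ is $\mathcal{T}$-flabby, then $F$ is $\mathcal{T}$-flabby if and only if $F''$ is $\mathcal{T}$-flabby.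
   Context: Let $X$ be a topological space and $\mathcal{T}$ a family of open subsets of $X$. A $\mathcal{T}$-subset of $X$ is a finite Boolean combination of elements of $\mathcal{T}$; a $\mathcal{T}$-connected subset is a $\mathcal{T}$-subset which is not the disjoint union of two proper $\mathcal{T}$-subsets that are both open and closed in it. $X$ is a $\mathcal{T}$-space if (i) $\mathcal{T}$ is a basis of the topology of $X$ and $\emptyset\in\mathcal{T}$; (ii) $\mathcal{T}$ is closed under finite unions and finite intersections; (iii) every $U\in\mathcal{T}$ has finitely many $\mathcal{T}$-connected components. $X_\mathcal{T}$ is the site whose underlying category is $\mathcal{T}$ (morphisms are inclusions), a family $\{U_i\}\subset\mathcal{T}$ of subsets of $U\in\mathcal{T}$ being a covering of $U$ iff it admits a finite subfamily whose union is $U$. $\mathrm{Mod}(k_\mathcal{T})$ is the category of sheaves of $k$-vector spaces on $X_\mathcal{T}$. $F\in\mathrm{Mod}(k_\mathcal{T})$ is $\mathcal{T}$-flabby if for all $U,V\in\mathcal{T}$ with $U\subseteq V$ the restriction $\Gamma(V;F)\to\Gamma(U;F)$ is surjective. *)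

From HB Require Import structures.
From mathcomp Require Import all_boot all_order all_algebra.
From mathcomp Require Import boolp classical_sets functions cardinality topology.
Set Implicit Arguments. Unset Strict Implicit. Unset Printing Implicit Defensive.
Import Order.TTheory GRing.Theory.
Local Open Scope classical_set_scope.
Local Open Scope ring_scope.

Section TSpaces.
Variable X : topologicalType.
Variable T : set (set X).

Inductive Tsubset : set X -> Prop :=
  | Tsub_in U : T U -> Tsubset U
  | Tsub_compl A : Tsubset A -> Tsubset (~` A)
  | Tsub_union A B : Tsubset A -> Tsubset B -> Tsubset (A `|` B).

Definition open_in (A B : set X) := exists O : set X, open O /\ B = A `&` O.
Definition closed_in (A B : set X) := exists C : set X, closed C /\ B = A `&` C.

Definition Tconnected (A : set X) : Prop :=
  Tsubset A /\
  ~ (exists B C : set X,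
       [/\ Tsubset B, Tsubset C, B `|` C = A, B `&` C = set0 &
        [/\ B <> A, C <> A, open_in A B /\ closed_in A B &
            open_in A C /\ closed_in A C]]).

Definition Tcomponent (U C : set X) : Prop :=
  [/\ C `<=` U, Tconnected C, C !=set0 &
      forall D, Tconnected D -> C `<=` D -> D `<=` U -> D = C].

Definition Tspace : Prop :=
  [/\ (forall U, T U -> open U)
    , (forall O : set X, open O -> forall x, O x -> exists2 U, T U & U x /\ U `<=` O)
    , T set0
    , (forall U V, T U -> T V -> T (U `|` V) /\ T (U `&` V))
    & (forall U, T U -> finite_set (Tcomponent U))].

Definition Tcovering (U : set X) (I : Type) (Ui : I -> set X) : Prop :=
  (forall i, T (Ui i) /\ Ui i `<=` U) /\
  exists J : set I, finite_set J /\ U = \bigcup_(i in J) Ui i.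

End TSpaces.

Unset Implicit Arguments.
(** Sheaves of k-vector spaces on the site X_T (only the values on elements
    of T are meaningful; values on other sets are irrelevant junk). *)
Record Tsheaf (k : fieldType) (X : topologicalType) (T : set (set X)) := TSheaf {
  sec : set X -> lmodType k;
  res : forall U V : set X, sec V -> sec U;
  res_linear : forall U V, T U -> T V -> U `<=` V ->
    forall (a : k) (x y : sec V), res U V (a *: x + y) = a *: res U V x + res U V y;
  res_id : forall U, T U -> forall x : sec U, res U U x = x;
  res_comp : forall U V W, T U -> T V -> T W -> U `<=` V -> V `<=` W ->
    forall x : sec W, res U V (res V W x) = res U W x;
  sheaf_local : forall U (I : Type) (Ui : I -> set X), T U -> Tcovering T U Ui ->
    forall s : sec U, (forall i, res (Ui i) U s = 0) -> s = 0;
  sheaf_glue : forall U (I : Type) (Ui : I -> set X), T U -> Tcovering T U Ui ->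
    forall t : forall i, sec (Ui i),
      (forall i j, res (Ui i `&` Ui j) (Ui i) (t i) = res (Ui i `&` Ui j) (Ui j) (t j)) ->
      exists s : sec U, forall i, res (Ui i) U s = t i
}.

Arguments Tsheaf k {X} T.
Arguments sec {k X T}.
Arguments res {k X T}.

Record Tmorph (k : fieldType) (X : topologicalType) (T : set (set X))
    (F G : Tsheaf k T) := TMorph {
  mor : forall U : set X, sec F U -> sec G U;
  mor_linear : forall U, T U ->
    forall (a : k) (x y : sec F U), mor U (a *: x + y) = a *: mor U x + mor U y;
  mor_natural : forall U V, T U -> T V -> U `<=` V ->
    forall x : sec F V, mor U (res F U V x) = res G U V (mor V x)
}.

Arguments Tmorph {k X T}.
Arguments mor {k X T F G}.
Set Implicit Arguments.

Section Props.
Variables (k : fieldType) (X : topologicalType) (T : set (set X)).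

Definition Tflabby (F : Tsheaf k T) : Prop :=
  forall U V, T U -> T V -> U `<=` V ->
    forall t : sec F U, exists s : sec F V, res F U V s = t.

Definition Tmono (F G : Tsheaf k T) (f : Tmorph F G) : Prop :=
  forall U, T U -> injective (mor f U).

Definition Tshort_exact (F' F F'' : Tsheaf k T) (f : Tmorph F' F) (g : Tmorph F F'') : Prop :=
  [/\ Tmono f
    , (forall U, T U -> forall x : sec F' U, mor g U (mor f U x) = 0)
    , (forall U, T U -> forall s : sec F U, mor g U s = 0 ->
         exists (I : Type) (Ui : I -> set X), Tcovering T U Ui /\
           forall i, exists t : sec F' (Ui i), mor f (Ui i) t = res F (Ui i) U s)
    & (forall U, T U -> forall s : sec F'' U,
         exists (I : Type) (Ui : I -> set X), Tcovering T U Ui /\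
           forall i, exists t : sec F (Ui i), mor g (Ui i) t = res F'' (Ui i) U s)].

Definition Gamma_short_exact (U : set X) (F' F F'' : Tsheaf k T)
    (f : Tmorph F' F) (g : Tmorph F F'') : Prop :=
  [/\ injective (mor f U)
    , (forall s : sec F U, mor g U s = 0 <-> exists t : sec F' U, mor f U t = s)
    & (forall s'' : sec F'' U, exists s : sec F U, mor g U s = s'')].

End Props.

(* Points of the site X_T are the filters of T which are prime for its finite
   coverings. A nonzero section z over V has a nonzero germ at some point: by
   Zorn's lemma take a maximal filter containing V along which z does not
   vanish; it is prime, for if C and D were both outside it, z would vanish
   near both and hence, by locality, near C ∪ D. Consequently F embeds into
   Godement's sheaf V ↦ ∏_{p ∋ V} F_p, which is obviously flabby.
   For a short exact sequence with F' flabby, a section of F'' over U lifts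
   locally on a finite covering; two lifts over A and B differ on A ∩ B by a
   section of F', which extends to B, so after correcting the lift over B they
   glue to a lift over A ∪ B. Induction on the covering gives surjectivity of
   Γ(U; F) → Γ(U; F''), and (iii) follows by a diagram chase. *)

From HB Require Import structures.
From mathcomp Require Import all_boot all_order all_algebra.
From mathcomp Require Import boolp classical_sets functions cardinality topology.
Set Implicit Arguments. Unset Strict Implicit. Unset Printing Implicit Defensive.
Import Order.TTheory GRing.Theory.
Local Open Scope classical_set_scope.
Local Open Scope ring_scope.

#[local] Arguments res_linear {k X T} _ {U V}.
#[local] Arguments res_id {k X T} _ {U}.
#[local] Arguments res_comp {k X T} _ {U V W}.
#[local] Arguments sheaf_local {k X T} _ {U I Ui}.
#[local] Arguments sheaf_glue {k X T} _ {U I Ui}.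
#[local] Arguments mor_linear {k X T F G} _ {U}.
#[local] Arguments mor_natural {k X T F G} _ {U V}.

Section DependentProduct.
Variables (k : fieldType) (I : Type) (M : I -> lmodType k).

Definition dprod := forall i, M i.
HB.instance Definition _ := gen_eqMixin dprod.
HB.instance Definition _ := gen_choiceMixin dprod.

Definition dprod0 : dprod := fun i => 0.
Definition dprod_opp (f : dprod) : dprod := fun i => - f i.
Definition dprod_add (f g : dprod) : dprod := fun i => f i + g i.
Definition dprod_scale (a : k) (f : dprod) : dprod := fun i => a *: f i.

Let dprod_ext (f g : dprod) : (forall i, f i = g i) -> f = g.
Proof. exact: functional_extensionality_dep. Qed.

Lemma dprod_addA : associative dprod_add.
Proof. by move=> f g h; apply: dprod_ext => i; rewrite /dprod_add addrA. Qed.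
Lemma dprod_addC : commutative dprod_add.
Proof. by move=> f g; apply: dprod_ext => i; rewrite /dprod_add addrC. Qed.
Lemma dprod_add0 : left_id dprod0 dprod_add.
Proof. by move=> f; apply: dprod_ext => i; rewrite /dprod_add add0r. Qed.
Lemma dprod_addN : left_inverse dprod0 dprod_opp dprod_add.
Proof. by move=> f; apply: dprod_ext => i; rewrite /dprod_add addNr. Qed.
HB.instance Definition _ :=
  GRing.isZmodule.Build dprod dprod_addA dprod_addC dprod_add0 dprod_addN.

Lemma dprod_scaleA a b f : dprod_scale a (dprod_scale b f) = dprod_scale (a * b) f.
Proof. by apply: dprod_ext => i; rewrite /dprod_scale scalerA. Qed.
Lemma dprod_scale1 : left_id 1 dprod_scale.
Proof. by move=> f; apply: dprod_ext => i; rewrite /dprod_scale scale1r. Qed.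
Lemma dprod_scaleDr : right_distributive dprod_scale +%R.
Proof. by move=> a f g; apply: dprod_ext => i; rewrite /dprod_scale scalerDr. Qed.
Lemma dprod_scaleDl f : {morph dprod_scale^~ f : a b / a + b}.
Proof. by move=> a b; apply: dprod_ext => i; rewrite /dprod_scale scalerDl. Qed.
HB.instance Definition _ := GRing.Zmodule_isLmodule.Build k dprod
  dprod_scaleA dprod_scale1 dprod_scaleDr dprod_scaleDl.

Lemma dprodED (f g : dprod) i : (f + g) i = f i + g i. Proof. by []. Qed.
Lemma dprodEZ a (f : dprod) i : (a *: f) i = a *: f i. Proof. by []. Qed.

End DependentProduct.

Section Quotient.
Variables (k : fieldType) (V : lmodType k).

Record subspace := Subspace {
  subspace_set :> V -> Prop;
  subspace0 : subspace_set 0;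
  subspaceD : forall x y, subspace_set x -> subspace_set y -> subspace_set (x + y);
  subspaceZ : forall a x, subspace_set x -> subspace_set (a *: x) }.

Variable K : subspace.

Lemma subspaceB x y : K x -> K y -> K (x - y).
Proof. by move=> Kx Ky; apply: subspaceD Kx _; rewrite -scaleN1r; apply: subspaceZ. Qed.

(* Elements of the quotient are the cosets themselves, so that equality of
   classes is Leibniz equality. *)
Definition quot := {A : set V | exists x, A = [set y | K (y - x)]}.
HB.instance Definition _ := gen_eqMixin quot.
HB.instance Definition _ := gen_choiceMixin quot.

Definition qclass (x : V) : quot := exist _ [set y | K (y - x)] (ex_intro _ x erefl).
Definition qrepr (A : quot) : V := projT1 (cid (proj2_sig A)).

Lemma qreprK A : qclass (qrepr A) = A.
Proof.
rewrite /qrepr; case: (cid _) => x /= hx; case: A hx => A HA /= hx.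
by subst A; congr exist; exact: Prop_irrelevance.
Qed.

Lemma qclass_eq x y : qclass x = qclass y <-> K (x - y).
Proof.
split=> [/(congr1 sval) /= E|Kxy].
  have : [set z | K (z - x)] x by rewrite /= subrr; exact: subspace0.
  by rewrite E.
apply: eq_exist; apply/seteqP; split=> z /= Kz.
  by have := subspaceD Kz Kxy; rewrite addrA subrK.
by have := subspaceB Kz Kxy; rewrite opprB addrA subrK.
Qed.

Lemma qreprE x : K (qrepr (qclass x) - x).
Proof. by apply/qclass_eq; rewrite qreprK. Qed.

Definition qadd A B := qclass (qrepr A + qrepr B).
Definition qopp A := qclass (- qrepr A).
Definition qscale a A := qclass (a *: qrepr A).

Lemma qaddE x y : qadd (qclass x) (qclass y) = qclass (x + y).
Proof.
apply/qclass_eq; have := subspaceD (qreprE x) (qreprE y).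
by rewrite opprD !addrA -[_ + _ - x]addrAC -!addrA.
Qed.
Lemma qoppE x : qopp (qclass x) = qclass (- x).
Proof. by apply/qclass_eq; rewrite opprK addrC -opprB -[- _]scaleN1r; apply/subspaceZ/qreprE. Qed.
Lemma qscaleE a x : qscale a (qclass x) = qclass (a *: x).
Proof. by apply/qclass_eq; rewrite -scalerBr; apply/subspaceZ/qreprE. Qed.

Lemma qaddA : associative qadd.
Proof. by move=> A B C; rewrite -[A]qreprK -[B]qreprK -[C]qreprK !qaddE addrA. Qed.
Lemma qaddC : commutative qadd.
Proof. by move=> A B; rewrite -[A]qreprK -[B]qreprK !qaddE addrC. Qed.
Lemma qadd0 : left_id (qclass 0) qadd.
Proof. by move=> A; rewrite -[A]qreprK qaddE add0r. Qed.
Lemma qaddN : left_inverse (qclass 0) qopp qadd.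
Proof. by move=> A; rewrite -[A]qreprK qoppE qaddE addNr. Qed.
HB.instance Definition _ := GRing.isZmodule.Build quot qaddA qaddC qadd0 qaddN.

Lemma qclassD x y : qclass (x + y) = qclass x + qclass y.
Proof. by rewrite -qaddE. Qed.

Lemma qscaleA a b A : qscale a (qscale b A) = qscale (a * b) A.
Proof. by rewrite -[A]qreprK !qscaleE scalerA. Qed.
Lemma qscale1 : left_id 1 qscale.
Proof. by move=> A; rewrite -[A]qreprK qscaleE scale1r. Qed.
Lemma qscaleDr : right_distributive qscale +%R.
Proof. by move=> a A B; rewrite -[A]qreprK -[B]qreprK -qclassD !qscaleE -qclassD scalerDr. Qed.
Lemma qscaleDl A : {morph qscale^~ A : a b / a + b}.
Proof. by move=> a b; rewrite -[A]qreprK !qscaleE -qclassD scalerDl. Qed.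
HB.instance Definition _ :=
  GRing.Zmodule_isLmodule.Build k quot qscaleA qscale1 qscaleDr qscaleDl.

Lemma qclassZ a x : qclass (a *: x) = a *: qclass x.
Proof. by rewrite -qscaleE. Qed.

Lemma qclass_eq0 x : qclass x = 0 <-> K x.
Proof. by rewrite qclass_eq subr0. Qed.

End Quotient.

Lemma bigcup_finite_ind (Y I : Type) (P : set Y -> Prop) (J : set I) (F : I -> set Y) :
  finite_set J -> P set0 -> (forall i A, J i -> P A -> P (F i `|` A)) ->
  P (\bigcup_(i in J) F i).
Proof.
elim/Pchoice: I => I in J F *; move=> finJ P0 PU.
rewrite -bigsetU_fset_set // big_seq; apply: big_rec => // i A.
by rewrite in_fset_set // inE; apply: PU.
Qed.

Lemma Zorn_bigcup_neq0 (Y : Type) (P : set (set Y)) :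
  (exists2 A, P A & A !=set0) ->
  (forall C : set (set Y), C `<=` P -> C !=set0 -> total_on C subset ->
     P (\bigcup_(A in C) A)) ->
  exists A, P A /\ forall B, A `<` B -> ~ P B.
Proof.
move=> [A0 PA0 [y A0y]] chainP.
(* [set0] is adjoined as an upper bound for the empty chain. *)
have [|A [[PA|->] maxA]] := @Zorn_bigcup _ (P `|` [set set0]).
- move=> C CP totC; have [[A CA nA]|] := pselect (exists2 A, C A & A != set0).
    left; rewrite (_ : \bigcup_(A in C) A = \bigcup_(A in C `\ set0) A).
      apply: chainP; first by move=> B [/CP[//|/= ->]].
        by exists A; split => //=; apply/eqP.
      by move=> B B' [CB _] [CB' _]; apply: totC.
    apply/seteqP; split=> [x [B CB Bx]|x [B [CB _] Bx]]; last by exists B.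
    by exists B => //; split => // /= B0; rewrite B0 in Bx.
  move=> allC; right; apply/seteqP; split=> // x [B CB Bx]; apply: allC.
  by exists B => //; apply/negP => /eqP B0; rewrite B0 in Bx.
- by exists A; split => // B AB PB; apply: (maxA B AB); left.
- exfalso; apply: (maxA A0) => /=; last by left.
  by split=> // A00; have := A00 y A0y.
Qed.

Section TspaceLemmas.
Variables (X : topologicalType) (T : set (set X)).
Hypothesis HT : Tspace T.

Lemma Tspace_set0 : T set0. Proof. by case: HT. Qed.
Lemma Tspace_setU A B : T A -> T B -> T (A `|` B).
Proof. by case: HT => _ _ _ TUI _ /TUI h /h []. Qed.
Lemma Tspace_setI A B : T A -> T B -> T (A `&` B).
Proof. by case: HT => _ _ _ TUI _ /TUI h /h []. Qed.

Lemma Tcovering2 A B : T A -> T B ->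
  Tcovering T (A `|` B) (fun b : bool => if b then A else B).
Proof.
move=> TA TB; split; first by case; split.
exists setT; split; first exact: finite_finset.
apply/seteqP; split=> [x [Ax|Bx]|x [[] _ /= ?]]; by [exists true|exists false|left|right].
Qed.

Lemma Tcovering0 : Tcovering T set0 (fun v : void => match v with end).
Proof. by split; [case|exists set0; split; [exact: finite_set0|rewrite bigcup_set0]]. Qed.

End TspaceLemmas.

Section SheafLemmas.
Variables (k : fieldType) (X : topologicalType) (T : set (set X)).
Hypothesis HT : Tspace T.
Variable F : Tsheaf k T.

Section Restriction.
Variables (U V : set X) (TU : T U) (TV : T V) (UV : U `<=` V).

Lemma resB : {morph res F U V : x y / x - y}.
Proof. exact/zmod_morphism_linear/res_linear. Qed.

Lemma res0 : res F U V 0 = 0.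
Proof. by rewrite -(subrr 0) resB subrr. Qed.

End Restriction.

Lemma res_eq0_sub U V W (s : sec F V) : T U -> T V -> T W -> U `<=` V -> W `<=` U ->
  res F U V s = 0 -> res F W V s = 0.
Proof. by move=> TU TV TW UV WU sU0; rewrite -(res_comp F TW TU TV WU UV) sU0 res0. Qed.

Lemma sec_set0 (s : sec F set0) : s = 0.
Proof. by apply: (sheaf_local F (Tspace_set0 HT) (Tcovering0 T)); case. Qed.

Lemma sheaf_local2 U A B (s : sec F U) : T A -> T B -> U = A `|` B ->
  res F A U s = 0 -> res F B U s = 0 -> s = 0.
Proof.
move=> TA TB UAB; subst U => sA0 sB0.
by apply: (sheaf_local F (Tspace_setU HT TA TB) (Tcovering2 TA TB)); case.
Qed.

Lemma sheaf_glue2 A B (a : sec F A) (b : sec F B) : T A -> T B ->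
  res F (A `&` B) A a = res F (A `&` B) B b ->
  exists s : sec F (A `|` B), res F A (A `|` B) s = a /\ res F B (A `|` B) s = b.
Proof.
move=> TA TB ab.
have [|s sab] := sheaf_glue F (Tspace_setU HT TA TB) (Tcovering2 TA TB)
  (fun i => if i as i return sec F (if i then A else B) then a else b).
  by case; case => //=; rewrite setIC.
by exists s; split; [exact: (sab true)|exact: (sab false)].
Qed.

End SheafLemmas.

Section MorphismLemmas.
Variables (k : fieldType) (X : topologicalType) (T : set (set X)).
Variables (F G : Tsheaf k T) (f : Tmorph F G) (U : set X) (TU : T U).

Lemma morB : {morph mor f U : x y / x - y}.
Proof. exact/zmod_morphism_linear/mor_linear. Qed.

Lemma mor0 : mor f U 0 = 0.
Proof. by rewrite -(subrr 0) morB subrr. Qed.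

End MorphismLemmas.

Section ShortExact.
Variables (k : fieldType) (X : topologicalType) (T : set (set X)).
Hypothesis HT : Tspace T.
Variables (F' F F'' : Tsheaf k T) (f : Tmorph F' F) (g : Tmorph F F'').
Hypothesis fg_exact : Tshort_exact f g.

Lemma short_exact_mono V : T V -> injective (mor f V).
Proof. by case: fg_exact => + _ _ _; apply. Qed.

Lemma short_exact_comp0 V : T V -> forall x, mor g V (mor f V x) = 0.
Proof. by case: fg_exact => _ + _ _; apply. Qed.

Lemma short_exact_ker_im V (s : sec F V) : T V -> mor g V s = 0 ->
  exists t, mor f V t = s.
Proof.
move=> TV gs0; case: fg_exact => _ _ ker_loc _.
have [I [Ui [cov s_loc]]] := ker_loc V TV s gs0.
have [coverUi _] := cov.
have TUi i : T (Ui i) := (coverUi i).1.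
have UiV i : Ui i `<=` V := (coverUi i).2.
pose t i := projT1 (cid (s_loc i)).
have tE i : mor f (Ui i) (t i) = res F (Ui i) V s := projT2 (cid (s_loc i)).
have [|t0 t0E] := sheaf_glue F' TV cov t.
  move=> i j; have TUij := Tspace_setI HT (TUi i) (TUi j).
  apply: (short_exact_mono TUij).
  rewrite (mor_natural f TUij (TUi i) (@subIsetl _ _ _)).
  rewrite (mor_natural f TUij (TUi j) (@subIsetr _ _ _)) !tE.
  rewrite (res_comp F TUij (TUi i) TV (@subIsetl _ _ _) (UiV i)).
  by rewrite (res_comp F TUij (TUi j) TV (@subIsetr _ _ _) (UiV j)).
exists t0; apply/eqP; rewrite -subr_eq0; apply/eqP.
apply: (sheaf_local F TV cov) => i.
by rewrite resB // -(mor_natural f (TUi i) TV (UiV i)) t0E tE subrr.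
Qed.

Hypothesis F'_flabby : Tflabby F'.

Lemma lift_setU A B (s'' : sec F'' (A `|` B)) (a : sec F A) (b : sec F B) :
  T A -> T B ->
  mor g A a = res F'' A (A `|` B) s'' -> mor g B b = res F'' B (A `|` B) s'' ->
  exists s, mor g (A `|` B) s = s''.
Proof.
move=> TA TB ga gb.
have TAB := Tspace_setI HT TA TB; have TAuB := Tspace_setU HT TA TB.
have ABA : A `&` B `<=` A := @subIsetl _ _ _.
have ABB : A `&` B `<=` B := @subIsetr _ _ _.
pose d := res F (A `&` B) B b - res F (A `&` B) A a.
have gd0 : mor g (A `&` B) d = 0.
  rewrite morB // (mor_natural g TAB TB ABB) (mor_natural g TAB TA ABA) ga gb.
  by rewrite !(res_comp F'' TAB) ?subrr.
have [t ft] := short_exact_ker_im TAB gd0.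
have [t' t't] := F'_flabby TAB TB ABB t.
pose b' := b - mor f B t'.
have ab' : res F (A `&` B) A a = res F (A `&` B) B b'.
  by rewrite resB // -(mor_natural f TAB TB ABB) t't ft opprB addrC subrK.
have [s [sa sb']] := sheaf_glue2 HT TA TB ab'.
exists s; apply/eqP; rewrite -subr_eq0; apply/eqP.
apply: (sheaf_local2 HT TA TB erefl); rewrite resB //.
  by rewrite -(mor_natural g TA TAuB (@subsetUl _ _ _)) sa ga subrr.
rewrite -(mor_natural g TB TAuB (@subsetUr _ _ _)) sb' morB //.
by rewrite short_exact_comp0 // subr0 gb subrr.
Qed.

Lemma short_exact_surj V (s'' : sec F'' V) : T V -> exists s, mor g V s = s''.
Proof.
move=> TV; case: fg_exact => _ _ _ /(_ V TV s'') [I [Ui [[coverUi [J [finJ VJ]]] s''_loc]]].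
pose P A := [/\ T A, A `<=` V & exists s, mor g A s = res F'' A V s''].
suff : P (\bigcup_(i in J) Ui i).
  by rewrite -VJ => -[_ _ [s gs]]; exists s; rewrite gs res_id.
apply: bigcup_finite_ind => //.
  split; [exact: Tspace_set0|by []|exists 0].
  by rewrite mor0 ?[RHS](sec_set0 HT) //; exact: Tspace_set0.
move=> i A _ [TA AV [b gb]].
have [TUi UiV] := coverUi i; have [a ga] := s''_loc i.
have UiAV : Ui i `|` A `<=` V by move=> x [/UiV|/AV].
have TUiA := Tspace_setU HT TUi TA.
split=> //; apply: (lift_setU (a := a) (b := b)) => //.
  by rewrite (res_comp F'' TUi TUiA TV (@subsetUl _ _ _) UiAV).
by rewrite (res_comp F'' TA TUiA TV (@subsetUr _ _ _) UiAV).
Qed.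

Lemma short_exact_Gamma U : T U -> Gamma_short_exact U f g.
Proof.
move=> TU; split; first exact: short_exact_mono.
  by move=> s; split=> [/(short_exact_ker_im TU)|[t <-]]; last exact: short_exact_comp0.
by move=> s''; apply: short_exact_surj.
Qed.

(* Conversely, a lift to [F] of an extension of [g t] is corrected by an
   extension of the [F']-section measuring its discrepancy with [t] on [U]. *)
Lemma Tflabby_short_exact : Tflabby F <-> Tflabby F''.
Proof.
split=> [F_flabby|F''_flabby] U V TU TV UV t.
  have [t' gt'] := short_exact_surj t TU.
  have [s st'] := F_flabby U V TU TV UV t'.
  by exists (mor g V s); rewrite -(mor_natural g TU TV UV) st' gt'.
have [s'' s''t] := F''_flabby U V TU TV UV (mor g U t).
have [s gs] := short_exact_surj s'' TV.
have gd0 : mor g U (res F U V s - t) = 0.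
  by rewrite morB // (mor_natural g TU TV UV) gs s''t subrr.
have [u fu] := short_exact_ker_im TU gd0.
have [u' u'u] := F'_flabby TU TV UV u.
exists (s - mor f V u').
by rewrite resB // -(mor_natural f TU TV UV) u'u fu opprB addrC subrK.
Qed.

End ShortExact.

Section Points.
Variables (X : topologicalType) (T : set (set X)).
Hypothesis HT : Tspace T.

Definition Tfilter (p : set (set X)) : Prop :=
  [/\ p `<=` T, (forall A B, p A -> p B -> p (A `&` B))
    & (forall A B, p A -> T B -> A `<=` B -> p B)].

Definition Tpoint (p : set (set X)) : Prop :=
  [/\ Tfilter p, p !=set0
    & forall (I : Type) (Ui : I -> set X) W, p W -> Tcovering T W Ui -> exists i, p (Ui i)].

Lemma prime_Tfilter_point p : Tfilter p -> p !=set0 -> ~ p set0 ->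
  (forall C D, T C -> T D -> p (C `|` D) -> p C \/ p D) -> Tpoint p.
Proof.
move=> p_filter p_neq0 p_set0 p_prime; split=> // I Ui W pW [coverUi [J [finJ WJ]]].
pose P A := T A /\ (p A -> exists i, p (Ui i)).
suff : P (\bigcup_(i in J) Ui i) by rewrite -WJ => -[_]; apply.
apply: bigcup_finite_ind => //; first by split; [exact: Tspace_set0 HT|move/p_set0].
move=> i A _ [TA pA_Ui]; have TUi := (coverUi i).1.
split; first exact: Tspace_setU.
by move=> /(p_prime _ _ TUi TA) [pUi|/pA_Ui //]; exists i.
Qed.

Section NonvanishingFilter.
Variables (k : fieldType) (F : Tsheaf k T) (V : set X) (z : sec F V).
Hypotheses (TV : T V) (z_neq0 : z <> 0).

Definition germ_neq0 (p : set (set X)) : Prop :=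
  forall W, p W -> res F (W `&` V) V z <> 0.

Definition nonvanishing_filter (p : set (set X)) : Prop :=
  [/\ Tfilter p, p V & germ_neq0 p].

Lemma germ_neq0_set0 p : germ_neq0 p -> ~ p set0.
Proof. by move=> pz p0; apply: (pz _ p0); rewrite set0I; apply: sec_set0. Qed.

Lemma nonvanishing_filter_maximal : exists p, nonvanishing_filter p /\
  forall q, p `<` q -> ~ nonvanishing_filter q.
Proof.
apply: Zorn_bigcup_neq0.
  exists [set W | T W /\ V `<=` W]; last by exists V; split.
  split; first split.
  - by move=> W [].
  - by move=> A B [TA VA] [TB VB]; split; [exact: Tspace_setI|move=> x Vx; split; auto].
  - by move=> A B [TA VA] TB AB; split => // x /VA /AB.
  - by split.
  - by move=> W [TW VW]; rewrite setIidr // res_id.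
move=> C Cgood [p0 Cp0] C_chain.
split; first split.
- by move=> W [p Cp pW]; have [[pT _ _] _ _] := Cgood _ Cp; apply: pT.
- move=> A B [p Cp pA] [q Cq qB].
  have [pq|qp] := C_chain _ _ Cp Cq.
    by exists q => //; have [[_ qI _] _ _] := Cgood _ Cq; apply: qI (pq _ pA) qB.
  by exists p => //; have [[_ pI _] _ _] := Cgood _ Cp; apply: pI pA (qp _ qB).
- move=> A B [p Cp pA] TB AB; exists p => //.
  by have [[_ _ p_up] _ _] := Cgood _ Cp; apply: p_up pA TB AB.
- by have [_ p0V _] := Cgood _ Cp0; exists p0.
- by move=> W [p Cp pW]; have [_ _ pz] := Cgood _ Cp; apply: pz.
Qed.

Section MaximalFilter.
Variable p : set (set X).
Hypotheses (p_nonvanishing : nonvanishing_filter p)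
  (p_maximal : forall q, p `<` q -> ~ nonvanishing_filter q).

(* Otherwise the filter generated by [p] and [E] would be a larger
   nonvanishing filter. *)
Lemma maximal_filter_germ_eq0 E : T E -> ~ p E ->
  exists2 P, p P & res F ((P `&` E) `&` V) V z = 0.
Proof.
move=> TE pE; have [[pT pI p_up] pV pz] := p_nonvanishing.
pose q := [set W | T W /\ exists2 P, p P & P `&` E `<=` W].
have pq : p `<` q.
  split=> [W pW|qp]; first by split; [exact: pT|exists W => // x []].
  by apply: pE; apply: qp; split=> //; exists V => // x [].
apply: contrapT => germ_neq0_pE; apply: (p_maximal pq); split; first split.
- by move=> W [].
- move=> A B [TA [P pP PA]] [TB [Q pQ QB]].
  split; first exact: Tspace_setI.
  by exists (P `&` Q); [exact: pI|move=> x [[Px Qx] Ex]; split; [apply: PA|apply: QB]].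
- move=> A B [TA [P pP PA]] TB AB; split=> //.
  by exists P => // x /PA /AB.
- by split=> //; exists V => // x [].
- move=> W [TW [P pP PW]] zW0; apply: germ_neq0_pE; exists P => //.
  have TPEV : T ((P `&` E) `&` V) by do 2?apply: Tspace_setI => //; exact: pT.
  apply: (res_eq0_sub (Tspace_setI HT TW TV) TV TPEV _ _ zW0).
    exact: subIsetr.
  by move=> x [/PW Wx Vx].
Qed.

(* Otherwise [z] vanishes near [C] and near [D] for members [P], [Q] of [p],
   hence by locality on [R `&` V] for [R := P `&` Q `&` (C `|` D)] in [p]. *)
Lemma maximal_filter_prime C D : T C -> T D -> p (C `|` D) -> p C \/ p D.
Proof.
move=> TC TD pCD; have [[pT pI _] _ pz] := p_nonvanishing.
apply: contrapT => /not_orP[pC pD].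
have [P pP zPC] := maximal_filter_germ_eq0 TC pC.
have [Q pQ zQD] := maximal_filter_germ_eq0 TD pD.
pose R := (P `&` Q) `&` (C `|` D).
have pR : p R := pI _ _ (pI _ _ pP pQ) pCD.
have TR := pT _ pR; have TRV := Tspace_setI HT TR TV.
have TRCV : T ((R `&` C) `&` V) by do 2?apply: Tspace_setI.
have TRDV : T ((R `&` D) `&` V) by do 2?apply: Tspace_setI.
apply: (pz _ pR); apply: (sheaf_local2 HT TRCV TRDV).
- apply/seteqP; split=> [x [[Rx CDx] Vx]|x [[[Rx _] Vx]|[[Rx _] Vx]]] //.
  by case: (CDx) => [Cx|Dx]; [left|right].
- have RCV_RV : (R `&` C) `&` V `<=` R `&` V by move=> x [[Rx _] Vx].
  rewrite (res_comp F TRCV TRV TV RCV_RV (@subIsetr _ _ _)).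
  apply: (res_eq0_sub _ TV TRCV _ _ zPC).
  + by do 2?apply: Tspace_setI => //; exact: pT.
  + exact: subIsetr.
  + by move=> x [[[[Px _] _] Cx] Vx].
- have RDV_RV : (R `&` D) `&` V `<=` R `&` V by move=> x [[Rx _] Vx].
  rewrite (res_comp F TRDV TRV TV RDV_RV (@subIsetr _ _ _)).
  apply: (res_eq0_sub _ TV TRDV _ _ zQD).
  + by do 2?apply: Tspace_setI => //; exact: pT.
  + exact: subIsetr.
  + by move=> x [[[[_ Qx] _] Dx] Vx].
Qed.

End MaximalFilter.

Lemma exists_point_germ_neq0 : exists p, [/\ Tpoint p, p V & germ_neq0 p].
Proof.
have [p [p_nonvanishing p_maximal]] := nonvanishing_filter_maximal.
have [p_filter pV pz] := p_nonvanishing.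
exists p; split=> //; apply: prime_Tfilter_point => //.
- by exists V.
- exact: germ_neq0_set0.
- exact: maximal_filter_prime.
Qed.

End NonvanishingFilter.
End Points.

Section Godement.
Variables (k : fieldType) (X : topologicalType) (T : set (set X)).
Hypothesis HT : Tspace T.
Variable F : Tsheaf k T.

Definition Tpt := {p : set (set X) | Tpoint T p}.

Lemma Tpt_up (p : Tpt) A B : sval p A -> T B -> A `<=` B -> sval p B.
Proof. by have [[_ _ p_up] _ _] := svalP p; apply: p_up. Qed.

Lemma Tpt_setI (p : Tpt) A B : sval p A -> sval p B -> sval p (A `&` B).
Proof. by have [[_ pI _] _ _] := svalP p; apply: pI. Qed.

Lemma Tpt_cover (p : Tpt) (I : Type) (Ui : I -> set X) W :
  sval p W -> Tcovering T W Ui -> exists i, sval p (Ui i).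
Proof. by have [_ _ p_cover] := svalP p; apply: p_cover. Qed.

(* The stalk of [F] at [p] is the space of families [(s_W)_W] of sections
   modulo those vanishing below some member of [p]; junk components at
   [W \notin T] are harmless. *)
Definition families : lmodType k := dprod (sec F).

Definition vanishing_near (p : Tpt) (f : families) : Prop :=
  exists2 W0, sval p W0 & forall W, T W -> W `<=` W0 -> f W = 0.

Lemma vanishing_near0 p : vanishing_near p 0.
Proof. by have [_ [W pW] _] := svalP p; exists W. Qed.

Lemma vanishing_nearD p f g :
  vanishing_near p f -> vanishing_near p g -> vanishing_near p (f + g).
Proof.
move=> [W1 pW1 f0] [W2 pW2 g0]; exists (W1 `&` W2); first exact: Tpt_setI.
by move=> W TW WW12; rewrite dprodED f0 ?g0 ?addr0 // => x /WW12 [].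
Qed.

Lemma vanishing_nearZ p a f : vanishing_near p f -> vanishing_near p (a *: f).
Proof. by move=> [W pW f0]; exists W => // W' TW' W'W; rewrite dprodEZ f0 ?scaler0. Qed.

Definition vanishing_near_subspace p : subspace families :=
  Subspace (vanishing_near0 p) (@vanishing_nearD p) (@vanishing_nearZ p).

Definition stalk (p : Tpt) : lmodType k := quot (vanishing_near_subspace p).

Definition godement_sec (V : set X) : lmodType k :=
  dprod (fun q : {p : Tpt | sval p V} => stalk (sval q)).

Definition godement_res (U V : set X) (s : godement_sec V) : godement_sec U :=
  fun q => match pselect (sval (sval q) V) with
           | left qV => s (exist _ (sval q) qV)
           | right _ => 0
           end.
Arguments godement_res : clear implicits.

Lemma godement_resE U V (s : godement_sec V) (q : {p : Tpt | sval p U})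
    (qV : sval (sval q) V) :
  godement_res U V s q = s (exist _ (sval q) qV).
Proof. by rewrite /godement_res; case: pselect => // qV'; rewrite (Prop_irrelevance qV' qV). Qed.
Arguments godement_resE {U V s q}.

Lemma godement_res_linear U V : T U -> T V -> U `<=` V ->
  forall a (s t : godement_sec V),
  godement_res U V (a *: s + t) = a *: godement_res U V s + godement_res U V t.
Proof.
move=> TU TV UV a s t; apply: functional_extensionality_dep => q.
by rewrite dprodED dprodEZ !(godement_resE (Tpt_up (svalP q) TV UV)).
Qed.

Lemma godement_res_id U : T U -> forall s : godement_sec U, godement_res U U s = s.
Proof.
move=> TU s; apply: functional_extensionality_dep => q.
by rewrite (godement_resE (proj2_sig q)); case: q.
Qed.

Lemma godement_res_comp U V W : T U -> T V -> T W -> U `<=` V -> V `<=` W ->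
  forall s : godement_sec W, godement_res U V (godement_res V W s) = godement_res U W s.
Proof.
move=> TU TV TW UV VW s; apply: functional_extensionality_dep => q.
have qV := Tpt_up (svalP q) TV UV; have qW := Tpt_up qV TW VW.
by rewrite (godement_resE qV) (godement_resE qW) (godement_resE (q := exist _ (sval q) qV) qW).
Qed.

Lemma godement_local U (I : Type) (Ui : I -> set X) : T U -> Tcovering T U Ui ->
  forall s : godement_sec U, (forall i, godement_res (Ui i) U s = 0) -> s = 0.
Proof.
move=> TU cov s s0; apply: functional_extensionality_dep => q.
have [i qUi] := Tpt_cover (proj2_sig q) cov.
have := congr1 (fun t : godement_sec (Ui i) => t (exist _ (sval q) qUi)) (s0 i).
by rewrite (godement_resE (q := exist _ (sval q) qUi) (proj2_sig q)); case: q qUi => q qU qUi /= ->.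
Qed.

(* At a point [q] of [U], pick a member [Ui i] of the covering containing it;
   the compatibility makes the value independent of the choice. *)
Lemma godement_glue U (I : Type) (Ui : I -> set X) : T U -> Tcovering T U Ui ->
  forall t : forall i, godement_sec (Ui i),
  (forall i j, godement_res (Ui i `&` Ui j) (Ui i) (t i) =
               godement_res (Ui i `&` Ui j) (Ui j) (t j)) ->
  exists s : godement_sec U, forall i, godement_res (Ui i) U s = t i.
Proof.
move=> TU cov t t_compat; have [coverUi _] := cov.
pose choice (q : {p : Tpt | sval p U}) : {i : I | sval (sval q) (Ui i)} :=
  cid (Tpt_cover (proj2_sig q) cov).
exists (fun q => t (projT1 (choice q)) (exist _ (sval q) (projT2 (choice q)))) => j.
apply: functional_extensionality_dep => q.
have qU := Tpt_up (proj2_sig q) TU (coverUi j).2.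
rewrite (godement_resE qU) /=; case: (choice _) => i qUi /=.
have qUij := Tpt_setI qUi (proj2_sig q).
have := congr1 (fun s : godement_sec (Ui i `&` Ui j) => s (exist _ (sval q) qUij)) (t_compat i j).
rewrite (godement_resE (q := exist _ (sval q) qUij) qUi).
rewrite (godement_resE (q := exist _ (sval q) qUij) (proj2_sig q)).
case: q qU qUij qUi => q qj /= _ qUij qUi E; apply: etrans E.
by congr (t i (exist _ _ _)); exact: Prop_irrelevance.
Qed.

Definition godement : Tsheaf k T := @TSheaf k X T godement_sec godement_res
  godement_res_linear godement_res_id godement_res_comp godement_local godement_glue.

Lemma godement_flabby : Tflabby godement.
Proof.
move=> U V TU TV UV t; exists (godement_res V U t).
apply: functional_extensionality_dep => q; have qV := Tpt_up (proj2_sig q) TV UV.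
rewrite /= (godement_resE qV) (godement_resE (q := exist _ (sval q) qV) (proj2_sig q)).
by case: q qV.
Qed.

Definition family_of (V : set X) (s : sec F V) : families :=
  fun W => match pselect (T W /\ W `<=` V) with
           | left _ => res F W V s
           | right _ => 0
           end.
Arguments family_of : clear implicits.

Lemma family_of_linear V a (s t : sec F V) : T V ->
  family_of V (a *: s + t) = a *: family_of V s + family_of V t.
Proof.
move=> TV; apply: functional_extensionality_dep => W; rewrite dprodED dprodEZ /family_of.
by case: pselect => [[TW WV]|_]; [exact: res_linear|rewrite scaler0 addr0].
Qed.

Definition germ (V : set X) (s : sec F V) : godement_sec V :=
  fun q => qclass (vanishing_near_subspace (sval q)) (family_of V s).
Arguments germ : clear implicits.

Lemma germ_linear V : T V -> forall a (s t : sec F V),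
  germ V (a *: s + t) = a *: germ V s + germ V t.
Proof.
move=> TV a s t; apply: functional_extensionality_dep => q.
by rewrite dprodED dprodEZ /germ family_of_linear // qclassD qclassZ.
Qed.

(* The two families agree below [U], which belongs to the point. *)
Lemma germ_natural U V : T U -> T V -> U `<=` V ->
  forall s : sec F V, germ U (res F U V s) = godement_res U V (germ V s).
Proof.
move=> TU TV UV s; apply: functional_extensionality_dep => q.
rewrite (godement_resE (Tpt_up (proj2_sig q) TV UV)) /germ /=; apply/qclass_eq.
exists U => [|W TW WU]; first exact: (proj2_sig q).
change (family_of U (res F U V s) W - family_of V s W = 0).
rewrite /family_of; case: pselect => [_|[]]; last by split.
case: pselect => [_|[]]; last by split => // x /WU /UV.
by rewrite (res_comp F TW TU TV WU UV) subrr.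
Qed.

Definition germ_morph : Tmorph F godement := @TMorph k X T F godement germ germ_linear germ_natural.

Lemma germ_eq0 V (s : sec F V) : T V -> germ V s = 0 -> s = 0.
Proof.
move=> TV germ_s0; apply: contrapT => s_neq0.
have [p [p_point pV pz]] := exists_point_germ_neq0 HT TV s_neq0.
have [[pT _ _] _ _] := p_point.
have := congr1 (fun u : godement_sec V => u (exist _ (exist _ p p_point) pV)) germ_s0.
rewrite /= /germ => /qclass_eq0 [W pW s0].
have TWV := Tspace_setI HT (pT _ pW) TV.
have := s0 _ TWV (@subIsetl _ _ _); rewrite /family_of.
by case: pselect => [_|[]]; [exact: pz|split => //; exact: subIsetr].
Qed.

Lemma germ_morph_mono : Tmono germ_morph.
Proof.
move=> V TV s t /= st; apply/eqP; rewrite -subr_eq0; apply/eqP; apply: (germ_eq0 TV).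
by move: (morB germ_morph TV s t) => /= ->; rewrite st subrr.
Qed.

End Godement.

Theorem mainTheorem16 (k : fieldType) (X : topologicalType) (T : set (set X))
    (HT : Tspace T) (U : set X) (HU : T U) :
  (forall F : Tsheaf k T,
     exists (F' : Tsheaf k T) (f : Tmorph F F'), Tflabby F' /\ Tmono f) /\
  (forall (F' F F'' : Tsheaf k T) (f : Tmorph F' F) (g : Tmorph F F''),
     Tshort_exact f g -> Tflabby F' -> Gamma_short_exact U f g) /\
  (forall (F' F F'' : Tsheaf k T) (f : Tmorph F' F) (g : Tmorph F F''),
     Tshort_exact f g -> Tflabby F' -> (Tflabby F <-> Tflabby F'')).
Proof.
split.
  move=> F; exists (godement F), (germ_morph F).
  by split; [exact: godement_flabby|exact: (@germ_morph_mono _ _ _ HT F)].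
split=> F' F F'' f g fg_exact F'_flabby.
  exact: (short_exact_Gamma HT fg_exact F'_flabby HU).
exact: (Tflabby_short_exact HT fg_exact F'_flabby).
Qed.
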